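(* Let $n,m\ge1$ be integers (not necessarily distinct). Then for the Ramsey number $\mathcal{R}_{\mathcal{MAT}}$ with respect to the class $\mathcal{MAT}$ of matrix graphs, \[ \mathcal{R}_{\mathcal{MAT}}(n,m)=\mathcal{R}_{\mathcal{PO}}(n,m)=(n-1)(m-1)+1 . \]
   Context: For a commutative ring $R$ (with $1\ne0$) that is not a field and an integer $j\ge2$, let $V$ be the set of $j\times j$ matrices over $R$ whose determinant is a proper element (non-zero non-unit) of $R$. The matrix graph $\mathrm{Mat}(R)$ has vertex set $V$, distinct $A,B$ adjacent iff $\det(A)\parallel\det(B)$ or $\det(B)\parallel\det(A)$, where $a\parallel b$ means $a\mid b$ and $b\nmid a$. $\mathcal{MAT}$ is the class of all matrix graphs (over all such $R$ and $j$). $\mathcal{PO}$ is the class of partial order graphs $G_A$ of posets $(A,\le)$ (distinct vertices adjacent iff comparable). For a class $\mathcal{C}$ of graphs, $\mathcal{R}_{\mathcal{C}}(n,m)$ is the minimal $r$ such that every induced subgraph with $r$ vertices of any graph in $\mathcal{C}$ contains either $K_n$ or an independent set of $m$ vertices. *)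

From HB Require Import structures.
From mathcomp Require Import all_boot all_order all_algebra.
Set Implicit Arguments. Unset Strict Implicit. Unset Printing Implicit Defensive.
Import Order.TTheory GRing.Theory.
Local Open Scope ring_scope.

(* An induced subgraph with r vertices is given by an injective map S : 'I_r -> V
   (its image is the r-element vertex subset). *)

Definition has_clique (V : Type) (adj : V -> V -> Prop) (r : nat) (S : 'I_r -> V)
  (n : nat) : Prop :=
  exists f : 'I_n -> 'I_r, injective f /\
    (forall i j : 'I_n, i <> j -> adj (S (f i)) (S (f j))).

Definition has_indep (V : Type) (adj : V -> V -> Prop) (r : nat) (S : 'I_r -> V)
  (m : nat) : Prop :=
  exists f : 'I_m -> 'I_r, injective f /\
    (forall i j : 'I_m, i <> j -> ~ adj (S (f i)) (S (f j))).

Definition ramsey_good (V : Type) (adj : V -> V -> Prop) (n m r : nat) : Prop :=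
  forall S : 'I_r -> V, injective S -> has_clique adj S n \/ has_indep adj S m.

Definition is_least (P : nat -> Prop) (r : nat) : Prop :=
  P r /\ (forall r', P r' -> (r <= r')%N).

Definition rdvd (R : comNzRingType) (a b : R) : Prop := exists c : R, b = a * c.
Definition runit (R : comNzRingType) (a : R) : Prop := exists c : R, a * c = 1.
Definition sdvd (R : comNzRingType) (a b : R) : Prop := rdvd a b /\ ~ rdvd b a.
Definition proper_elt (R : comNzRingType) (a : R) : Prop := a <> 0 /\ ~ runit a.
Definition is_field (R : comNzRingType) : Prop := forall a : R, a <> 0 -> runit a.

Definition mat_vertex (R : comNzRingType) (j : nat) : Type :=
  {A : 'M[R]_j | proper_elt (\det A)}.

Definition mat_adj (R : comNzRingType) (j : nat) (A B : mat_vertex R j) : Prop :=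
  sdvd (\det (sval A)) (\det (sval B)) \/ sdvd (\det (sval B)) (\det (sval A)).

Definition MAT_good (n m r : nat) : Prop :=
  forall (R : comNzRingType) (j : nat), (2 <= j)%N -> ~ is_field R ->
    ramsey_good (@mat_adj R j) n m r.

Definition po_adj (d : Order.disp_t) (T : porderType d) (x y : T) : Prop :=
  ((x <= y)%O || (y <= x)%O).

Definition PO_good (n m r : nat) : Prop :=
  forall (d : Order.disp_t) (T : porderType d), ramsey_good (@po_adj d T) n m r.

From Pilot Require Import Defs.
From mathcomp Require Import all_boot all_order all_algebra.
From mathcomp Require Import zify boolp.

(* Adjacency in a matrix graph is comparability for the strict order "divides
   strictly" on determinants, so both classes consist of comparability graphs of
   strict orders.  Upper bound: by Mirsky's theorem (the dual of Dilworth's), a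
   strict order on more than k*l points has a chain of k+1 points or an antichain
   of l+1 points.  Lower bound: a disjoint union of m-1 chains of n-1 points has
   neither, and it is realized by divisibility on the numbers
   2^(a n + b) 3^((m-a) n + b), both in the divisibility poset of nat and as
   determinants of scalar integer matrices. *)

Set Implicit Arguments.
Unset Strict Implicit.
Unset Printing Implicit Defensive.

Import Order.TTheory GRing.Theory.

Lemma inj_ord_into_set (T : finType) (C : {set T}) k : k <= #|C| ->
  exists f : 'I_k -> T, injective f /\ forall i, f i \in C.
Proof.
move=> le_kC; exists (fun i => enum_val (widen_ord le_kC i)); split.
  by move=> i j /enum_val_inj /(congr1 val) eq_ij; apply: val_inj.
by move=> i; apply: enum_valP.
Qed.

Section ChainAntichain.
Variables (T : finType) (lt : rel T).
Hypotheses (lt_irr : irreflexive lt) (lt_trans : transitive lt).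

Definition comparable x y := lt x y || lt y x.
Definition chain (C : {set T}) := {in C &, forall x y, x != y -> comparable x y}.
Definition antichain (C : {set T}) :=
  {in C &, forall x y, x != y -> ~~ comparable x y}.

Lemma exists_maximal (C : {set T}) x0 : x0 \in C ->
  exists2 x, x \in C & {in C, forall y, ~~ lt x y}.
Proof.
move=> x0C; pose below x := [set y in C | lt y x].
have [x xC xmax] := arg_maxnP (fun x => #|below x|) x0C.
exists x => // y yC; apply/negP => lt_xy.
have : #|below x| < #|below y|.
  apply: proper_card; apply/properP; split.
    by apply/subsetP => z; rewrite !inE => /andP[-> /lt_trans]; apply.
  by exists x; rewrite !inE ?lt_xy ?lt_irr ?andbF ?andbT.
by move=> /leq_trans/(_ (xmax y yC)); rewrite ltnn.
Qed.

Lemma chain_or_antichain k l (A : {set T}) : k * l < #|A| ->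
  (exists C : {set T}, [/\ C \subset A, k < #|C| & chain C]) \/
  (exists C : {set T}, [/\ C \subset A, l < #|C| & antichain C]).
Proof.
elim: k A => [|k IHk] A ltA.
  have [x xA] : exists x, x \in A by apply/set0Pn; rewrite -card_gt0.
  left; exists [set x]; rewrite sub1set xA cards1; split=> // y z.
  by rewrite !inE => /eqP-> /eqP->; rewrite eqxx.
(* Either the maximal elements of A form a large antichain, or a long chain
   among the others extends by an element above its maximum. *)
pose M := [set x in A | [forall y in A, ~~ lt x y]].
have sMA : M \subset A by apply/subsetP => x; rewrite inE => /andP[].
have [ltM | leM] := ltnP l #|M|.
  right; exists M; split=> // x y; rewrite !inE.
  move=> /andP[xA /forall_inP xmax] /andP[yA /forall_inP ymax] _.
  by rewrite /comparable negb_or xmax ?ymax.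
have sDA : A :\: M \subset A by apply: subsetDl.
have ltD : k * l < #|A :\: M|.
  by rewrite cardsD (setIidPr sMA); move: ltA leM; rewrite mulSn; lia.
have [[C [sCD ltC chC]] | [C [sCD ltC achC]]] := IHk _ ltD; last first.
  by right; exists C; split=> //; apply: subset_trans sDA.
have [x0 x0C] : exists x, x \in C by apply/set0Pn; rewrite -card_gt0; lia.
have [x xC xmax] := exists_maximal x0C.
have /setDP[xA] := subsetP sCD x xC.
rewrite inE xA /= negb_forall => /existsP[y].
rewrite negb_imply negbK => /andP[yA lt_xy].
have yC : y \notin C by apply/negP => /xmax; rewrite lt_xy.
have lt_Cy : {in C, forall z, lt z y}.
  move=> z zC; have [-> // | zx] := eqVneq z x.
  case/orP: (chC z x zC xC zx) => [/lt_trans | lt_xz]; first exact.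
  by move: (xmax z zC); rewrite lt_xz.
left; exists (y |: C); split.
- by rewrite subUset sub1set yA (subset_trans sCD sDA).
- by rewrite cardsU1 yC.
- move=> a b; rewrite !inE => /predU1P[-> | aC] /predU1P[-> | bC];
    rewrite ?eqxx // /comparable ?lt_Cy ?orbT //.
  exact: chC.
Qed.

End ChainAntichain.

Lemma comparability_ramsey_good (V : Type) (adj lt : V -> V -> Prop) n m :
  (forall x, ~ lt x x) -> (forall x y z, lt x y -> lt y z -> lt x z) ->
  (forall x y, x <> y -> adj x y <-> lt x y \/ lt y x) ->
  ramsey_good adj n.+1 m.+1 (n * m).+1.
Proof.
move=> lt_irr lt_trans adjE S S_inj.
pose ltS i j := `[< lt (S i) (S j) >].
have ltS_irr : irreflexive ltS by move=> i; apply/asboolP/lt_irr.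
have ltS_trans : transitive ltS.
  by move=> j i k /asboolP lt_ij /asboolP lt_jk; apply/asboolP/(lt_trans _ _ _ lt_ij).
have adjSE i j : i != j -> adj (S i) (S j) <-> comparable ltS i j.
  move=> /eqP neq_ij; rewrite (adjE _ _ (fun eq_S => neq_ij (S_inj _ _ eq_S))).
  rewrite /comparable /ltS.
  by split=> [[] /asboolP -> | /orP[] /asboolP]; rewrite ?orbT; auto.
have ltA : n * m < #|[set: 'I_(n * m).+1]| by rewrite cardsT card_ord.
have [[C [_ ltC chC]] | [C [_ ltC achC]]] := chain_or_antichain ltS_irr ltS_trans ltA.
  left; have [f [f_inj fC]] := inj_ord_into_set ltC.
  exists f; split=> // i j /eqP neq_ij.
  have neq_fij : f i != f j by apply: contra neq_ij => /eqP /f_inj ->.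
  by apply/adjSE/chC.
right; have [f [f_inj fC]] := inj_ord_into_set ltC.
exists f; split=> // i j /eqP neq_ij.
have neq_fij : f i != f j by apply: contra neq_ij => /eqP /f_inj ->.
by move=> /(adjSE _ _ neq_fij); apply/negP/achC.
Qed.

Section Blocks.
Variables (V : Type) (adj : V -> V -> Prop) (m n : nat).
Variable code : 'I_m * 'I_n -> V.
Hypothesis code_inj : injective code.
Hypothesis adj_code : forall p q, p != q -> adj (code p) (code q) <-> p.1 = q.1.

Section Labelling.
Variables (r : nat) (lab : 'I_r -> 'I_m * 'I_n).
Hypothesis lab_inj : injective lab.

Let adj_lab i j : i != j -> adj (code (lab i)) (code (lab j)) <-> (lab i).1 = (lab j).1.
Proof. by move=> neq_ij; apply/adj_code; apply: contra neq_ij => /eqP /lab_inj ->. Qed.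

Lemma blocks_no_clique : ~ has_clique adj (code \o lab) n.+1.
Proof.
case=> f [f_inj f_clique].
have neq_f i j : i != j -> f i != f j.
  by move=> neq_ij; apply: contra neq_ij => /eqP /f_inj ->.
have same_block i : (lab (f i)).1 = (lab (f ord0)).1.
  have [-> // | neq_i0] := eqVneq i ord0.
  by apply/adj_lab/f_clique; [apply: neq_f | apply/eqP].
have inj_pos : injective (fun i => (lab (f i)).2).
  move=> i j eq_ij; apply/f_inj/lab_inj.
  by apply: injective_projections => //; rewrite !same_block.
by have := leq_card _ inj_pos; rewrite !card_ord ltnn.
Qed.

Lemma blocks_no_indep : ~ has_indep adj (code \o lab) m.+1.
Proof.
case=> f [f_inj f_indep].
have inj_block : injective (fun i => (lab (f i)).1).
  move=> i j eq_ij; apply/eqP/negPn/negP => neq_ij.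
  apply: (f_indep i j (elimN eqP neq_ij)); apply/adj_lab => //.
  by apply: contra neq_ij => /eqP /f_inj ->.
by have := leq_card _ inj_block; rewrite !card_ord ltnn.
Qed.

End Labelling.

Lemma blocks_ramsey_good_lt r : ramsey_good adj n.+1 m.+1 r -> n * m < r.
Proof.
move=> good; rewrite ltnNge; apply/negP => le_r.
have le_card : r <= #|[set: 'I_m * 'I_n]|.
  by rewrite cardsT card_prod !card_ord mulnC.
have [lab [lab_inj _]] := inj_ord_into_set le_card.
have S_inj : injective (code \o lab) by move=> i j /code_inj /lab_inj.
by case: (good _ S_inj) => [/blocks_no_clique | /blocks_no_indep]; apply.
Qed.

End Blocks.

Lemma dvdn_pow2_pow3 a b c d :
  (2 ^ a * 3 ^ b %| 2 ^ c * 3 ^ d) = (a <= c) && (b <= d).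
Proof.
have coprime23 k l : coprime (2 ^ k) (3 ^ l) by rewrite coprimeXl ?coprimeXr.
rewrite Gauss_dvd // mulnC Gauss_dvdr // dvdn_Pexp2l //.
by rewrite mulnC Gauss_dvdr 1?coprime_sym // dvdn_Pexp2l.
Qed.

Section BlockCode.
Variables m n : nat.

(* Raising p.2 raises both exponents; moving to a later block raises the first
   exponent and lowers the second, so distinct blocks are incomparable. *)
Definition block_code (p : 'I_m * 'I_n) : nat :=
  2 ^ (p.1 * n + p.2) * 3 ^ ((m - p.1) * n + p.2).

Lemma dvdn_block_code p q :
  (block_code p %| block_code q) = (p.1 == q.1) && (p.2 <= q.2).
Proof.
case: p q => [[a lt_am] [b lt_bn]] [[c lt_cm] [d lt_dn]].
rewrite dvdn_pow2_pow3 -val_eqE /=.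
have [lt_ac | lt_ca | <-] := ltngtP a c; last by rewrite !leq_add2l andbb.
- have : (m - c).+1 * n <= (m - a) * n by rewrite leq_mul2r; lia.
  rewrite mulSn; set X := (m - a) * n; set Y := (m - c) * n; lia.
- have : c.+1 * n <= a * n by rewrite leq_mul2r lt_ca orbT.
  rewrite mulSn; set X := a * n; set Y := c * n; lia.
Qed.

Lemma block_code_inj : injective block_code.
Proof.
move=> p q eq_pq.
have := dvdn_block_code p q; rewrite eq_pq dvdnn => /esym/andP[/eqP eq_block le_pq].
have := dvdn_block_code q p; rewrite eq_pq dvdnn => /esym/andP[_ le_qp].
by apply: injective_projections => //; apply/val_inj/eqP; rewrite eqn_leq le_pq.
Qed.

Lemma block_code_comparable p q :
  (block_code p %| block_code q) || (block_code q %| block_code p) = (p.1 == q.1).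
Proof. by rewrite !dvdn_block_code eq_sym; case: eqP => //= _; apply: leq_total. Qed.

Lemma block_code_gt1 p : 1 < block_code p.
Proof.
case: p => [[a lt_am] [b lt_bn]]; rewrite /block_code /=.
apply: (@leq_trans (3 ^ ((m - a) * n + b))); last by rewrite leq_pmull ?expn_gt0.
by rewrite -[1](expn0 3) ltn_exp2l //; nia.
Qed.

End BlockCode.

Section Divisibility.
Variable R : comNzRingType.
Local Open Scope ring_scope.

Lemma rdvd_refl (a : R) : rdvd a a.
Proof. by exists 1; rewrite mulr1. Qed.

Lemma rdvd_trans (a b c : R) : rdvd a b -> rdvd b c -> rdvd a c.
Proof. by move=> [x ->] [y ->]; exists (x * y); rewrite mulrA. Qed.

Lemma sdvd_irr (a : R) : ~ Defs.sdvd a a.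
Proof. by case=> _; apply; apply: rdvd_refl. Qed.

Lemma sdvd_trans (a b c : R) : Defs.sdvd a b -> Defs.sdvd b c -> Defs.sdvd a c.
Proof.
move=> [dvd_ab ndvd_ba] [dvd_bc ndvd_cb]; split; first exact: rdvd_trans dvd_bc.
by move=> /rdvd_trans/(_ dvd_ab).
Qed.

End Divisibility.

Lemma rdvd_int (a b : int) : rdvd a b <-> (a %| b)%Z.
Proof.
split=> [[c ->] | /dvdzP[c ->]]; first exact: dvdz_mulr (dvdzz a).
by exists c; rewrite mulrC.
Qed.

Lemma proper_elt_nat (a : nat) : 1 < a -> proper_elt (a%:Z).
Proof.
move=> lt1a; split=> [[eq_a0] | [c unit_c]]; first by rewrite eq_a0 in lt1a.
have /rdvd_int : rdvd (a%:Z) 1 by exists c; rewrite unit_c.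
by rewrite dvdz1 /= gtn_eqF.
Qed.

Lemma int_not_field : ~ is_field int.
Proof. by have [nz2 nunit2] := proper_elt_nat (isT : 1 < 2); move=> /(_ _ nz2). Qed.

Lemma PO_good_upper n m : PO_good n.+1 m.+1 (n * m).+1.
Proof.
move=> d T; apply: (@comparability_ramsey_good _ _ (fun x y : T => (x < y)%O)).
- by move=> x; rewrite ltxx.
- by move=> x y z; apply: lt_trans.
- move=> x y /eqP neq_xy.
  rewrite /po_adj !le_eqVlt (negbTE neq_xy) eq_sym (negbTE neq_xy) /=.
  by split=> [/orP[] | []] ->; rewrite ?orbT; auto.
Qed.

Lemma PO_good_lower n m r : PO_good n.+1 m.+1 r -> n * m < r.
Proof.
move=> good; apply: (@blocks_ramsey_good_lt _ (@po_adj _ natdvd) m n (@block_code m n)).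
- exact: block_code_inj.
- move=> p q _; rewrite /po_adj -[_ || _]/((block_code p %| block_code q) || _).
  by rewrite block_code_comparable; split=> /eqP.
- exact: good.
Qed.

Lemma MAT_good_upper n m : MAT_good n.+1 m.+1 (n * m).+1.
Proof.
move=> R j _ _.
apply: (@comparability_ramsey_good _ _ (fun A B : mat_vertex R j =>
  Defs.sdvd (\det (sval A)) (\det (sval B)))) => //.
- by move=> A; apply: sdvd_irr.
- by move=> A B C; apply: sdvd_trans.
Qed.

Section ScalarVertices.
Variables j m n : nat.

Lemma det_scalar_proper (a : nat) :
  1 < a -> proper_elt (\det (a%:Z%:M : 'M[int]_j.+1)).
Proof.
move=> lt1a; rewrite det_scalar -natz -natrX natz; apply: proper_elt_nat.
by rewrite -[1](expn0 a) ltn_exp2l.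
Qed.

Definition block_vertex (p : 'I_m * 'I_n) : mat_vertex int j.+1 :=
  exist (fun A => proper_elt (\det A)) _ (det_scalar_proper (block_code_gt1 p)).

Lemma rdvd_det_block_vertex p q :
  rdvd (\det (sval (block_vertex p))) (\det (sval (block_vertex q))) <->
  block_code p %| block_code q.
Proof.
by rewrite /= !det_scalar -!natz -!natrX !natz rdvd_int dvdzE /= dvdn_pexp2r.
Qed.

Lemma mat_adj_block_vertex p q : p != q ->
  @mat_adj _ j.+1 (block_vertex p) (block_vertex q) <-> p.1 = q.1.
Proof.
move=> neq_pq; transitivity (is_true (p.1 == q.1)); last by split=> /eqP.
have : ~~ ((block_code p %| block_code q) && (block_code q %| block_code p)).
  by rewrite -eqn_dvd (inj_eq (@block_code_inj m n)).
rewrite /mat_adj /Defs.sdvd !rdvd_det_block_vertex -block_code_comparable.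
by case: (_ %| _); case: (_ %| _); intuition.
Qed.

End ScalarVertices.

Lemma MAT_good_lower n m r : MAT_good n.+1 m.+1 r -> n * m < r.
Proof.
move=> good; apply: (@blocks_ramsey_good_lt _ (@mat_adj int 2) m n (@block_vertex 1 m n)).
- move=> p q /(congr1 (fun A : mat_vertex int 2 => sval A ord0 ord0)).
  by rewrite /= !mxE !mulr1n => -[/block_code_inj].
- exact: mat_adj_block_vertex.
- exact: good int_not_field.
Qed.

Theorem theorem3p16 (n m : nat) : (1 <= n)%N -> (1 <= m)%N ->
  is_least (MAT_good n m) ((n - 1) * (m - 1) + 1)%N /\
  is_least (PO_good n m) ((n - 1) * (m - 1) + 1)%N.
Proof.
case: n => // n _; case: m => // m _; rewrite !subn1 addn1 /=.
split; split.
- exact: MAT_good_upper.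
- exact: MAT_good_lower.
- exact: PO_good_upper.
- exact: PO_good_lower.
Qed.
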